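(* Let $W=\mathfrak{S}_n$, $1\le c\le n-2$, and let $w_2\in\mathfrak{S}_n$ with $w_2^2=1$. Suppose $\ell(s_{c+1}s_cw_2s_cs_{c+1})=\ell(w_2)+4$, $s_cw_2\ne w_2s_c$, $s_{c+1}s_cw_2s_c\neq s_cw_2s_cs_{c+1}$ and $s_{c+1}w_2s_cs_{c+1}<w_2s_cs_{c+1}$. Then $s_{c+1}w_2<w_2$, and either $s_{c+1}w_2=w_2s_{c+1}$ or $s_{c+1}w_2s_{c+1}<s_{c+1}w_2$.
   Context: $s_j=(j,j+1)$; $\ell$ is the Coxeter length of $\mathfrak{S}_n$ and $<$ is the Bruhat order. *)

From mathcomp Require Import all_boot all_order all_fingroup.
From Stdlib Require Import Relations.
Set Implicit Arguments. Unset Strict Implicit. Unset Printing Implicit Defensive.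

(* Symmetric group S_n realised as 'S_n = {perm 'I_n}; points are 0..n-1,
   so the paper's point k corresponds to the ordinal k-1. *)

(* Simple transposition s_j = (j, j+1) (paper's 1-based points), defined for
   1 <= j <= n-1; (junk value 1 otherwise). *)
Definition s (n j : nat) : 'S_n :=
  match @insub _ (fun k => k < n) _ j.-1, @insub _ (fun k => k < n) _ j with
  | Some a, Some b => tperm a b
  | _, _ => 1%g
  end.

Definition coxlen (n : nat) (w : 'S_n) : nat :=
  #|[set p : 'I_n * 'I_n | (p.1 < p.2) && (w p.2 < w p.1)]|.

Definition bruhat_step (n : nat) (u v : 'S_n) : Prop :=
  exists i j : 'I_n, i != j /\ v = (u * tperm i j)%g /\ coxlen u < coxlen v.

Definition bruhat_le (n : nat) : relation 'S_n :=
  clos_refl_trans 'S_n (@bruhat_step n).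

Definition bruhat_lt (n : nat) (u v : 'S_n) : Prop := bruhat_le u v /\ u <> v.

From mathcomp Require Import all_boot all_order all_fingroup zify.
From Stdlib Require Import Relations.
Set Implicit Arguments. Unset Strict Implicit. Unset Printing Implicit Defensive.

(* Let a < b < d be the 0-based points c-1, c, c+1, so s_c = (a b) and
   s_{c+1} = (b d); recall that in [{perm _}], (x * y) k = y (x k).
   Multiplying y on the left by an adjacent transposition (i j) changes the
   Coxeter length by exactly one, upwards iff y i < y j. As the four factors
   in s_{c+1} s_c w s_c s_{c+1} raise the length by 4 in total, each of them
   raises it; in particular w a < w b. The Bruhat hypothesis makes (b d) a
   left descent of w s_c s_{c+1}, and tracking the two adjacent swaps (using
   w a < w b and w = w^-1) this forces w d < w b, i.e. s_{c+1} w < w.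
   Finally, either w exchanges b and d, so w commutes with s_{c+1}, or
   (b d) is still a right descent of s_{c+1} w. *)

Definition inversions n (y : 'S_n) :=
  [set p : 'I_n * 'I_n | (p.1 < p.2) && (y p.2 < y p.1)].

Lemma coxlen_inversions n (y : 'S_n) : coxlen y = #|inversions y|.
Proof. by []. Qed.

Lemma coxlenV n (y : 'S_n) : coxlen y^-1%g = coxlen y.
Proof.
suff le_coxlenV (z : 'S_n) : coxlen z <= coxlen z^-1.
  by apply/eqP; rewrite eqn_leq le_coxlenV -{2}(invgK y) le_coxlenV.
rewrite !coxlen_inversions.
pose swap_image p := (z p.2, z p.1).
have inj_swap : injective swap_image.
  by move=> [p1 p2] [q1 q2] [/perm_inj -> /perm_inj ->].
rewrite -(card_imset _ inj_swap); apply/subset_leq_card/subsetP => q.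
case/imsetP=> -[p1 p2]; rewrite inE /= => /andP[lt_p lt_zp] ->.
by rewrite inE /= lt_zp !permK.
Qed.

Section AdjacentTransposition.
Local Open Scope group_scope.

Variables (n : nat) (i j : 'I_n).
Hypothesis adj_ij : i.+1 = j.

Let ne_ij : i != j.
Proof. by rewrite -val_eqE /= -adj_ij neq_ltn ltnSn. Qed.

Lemma tperm_adj_ltE (p q : 'I_n) :
  p < q -> (tperm i j p < tperm i j q) = ((p, q) != (i, j)).
Proof.
rewrite xpair_eqE; case: tpermP => [->|->|/eqP + /eqP +]; case: tpermP => [->|->|/eqP + /eqP +];
  rewrite -!val_eqE /=; lia.
Qed.

Lemma coxlen_tpermM_ascent (y : 'S_n) :
  y i < y j -> coxlen (tperm i j * y) = (coxlen y).+1.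
Proof.
move=> y_ij; rewrite !coxlen_inversions.
pose tperm_pair (p : 'I_n * 'I_n) := (tperm i j p.1, tperm i j p.2).
have inj_tperm_pair : injective tperm_pair.
  by move=> [p1 p2] [q1 q2] [/perm_inj -> /perm_inj ->].
have lt_ij : i < j by rewrite -adj_ij.
suff -> : inversions (tperm i j * y) = (i, j) |: tperm_pair @^-1: inversions y.
  rewrite cardsU1 card_preimset // !inE /= tpermL tpermR.
  by rewrite ltnNge (ltnW lt_ij).
apply/setP => -[q1 q2]; rewrite !inE /= !permM.
have [eq_q|ne_q] /= := eqVneq (q1, q2) (i, j).
  by case: eq_q => -> ->; rewrite tpermL tpermR lt_ij y_ij.
case: (ltngtP q1 q2) => [lt_q|lt_q|/val_inj ->]; last by rewrite !ltnn.
  by rewrite tperm_adj_ltE // ne_q.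
have := tperm_adj_ltE lt_q.
have [eq_q _|_ /= lt_t] := eqVneq (q2, q1) (i, j).
  by case: eq_q => [-> ->]; rewrite tpermL tpermR ltnNge (ltnW y_ij) !andbF.
by rewrite ltnNge (ltnW lt_t).
Qed.

Lemma coxlen_tpermM_descent (y : 'S_n) :
  y j < y i -> coxlen y = (coxlen (tperm i j * y)).+1.
Proof.
move=> y_ji; rewrite -coxlen_tpermM_ascent ?mulgA ?tperm2 ?mul1g //.
by rewrite !permM tpermL tpermR.
Qed.

Lemma coxlen_tpermM_ltE (y : 'S_n) : (coxlen (tperm i j * y) < coxlen y) = (y j < y i).
Proof.
case: (ltngtP (y i) (y j)) => [y_ij|y_ji|/val_inj/perm_inj eq_ij].
- by rewrite coxlen_tpermM_ascent // ltnNge leqnSn.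
- by rewrite [X in _ < X](coxlen_tpermM_descent y_ji) ltnSn.
- by move: ne_ij; rewrite eq_ij eqxx.
Qed.

Lemma coxlen_tpermM_le (y : 'S_n) : coxlen (tperm i j * y) <= (coxlen y).+1.
Proof.
case: (ltngtP (y i) (y j)) => [y_ij|y_ji|/val_inj/perm_inj eq_ij].
- by rewrite coxlen_tpermM_ascent.
- by rewrite (coxlen_tpermM_descent y_ji) leqW.
- by move: ne_ij; rewrite eq_ij eqxx.
Qed.

Lemma coxlen_Mtperm_descent (y : 'S_n) :
  y^-1 j < y^-1 i -> coxlen y = (coxlen (y * tperm i j)).+1.
Proof.
by rewrite -coxlenV -(coxlenV (y * _)) invMg tpermV; apply: coxlen_tpermM_descent.
Qed.

Lemma coxlen_Mtperm_le (y : 'S_n) : coxlen (y * tperm i j) <= (coxlen y).+1.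
Proof. by rewrite -coxlenV invMg tpermV -(coxlenV y) coxlen_tpermM_le. Qed.

End AdjacentTransposition.

Lemma bruhat_le_coxlen n (u v : 'S_n) : bruhat_le u v -> u = v \/ coxlen u < coxlen v.
Proof.
elim=> [x y [i [j [_ [_ lt_xy]]]]|x|x y z _ [->|lt_xy] _ [<-|lt_yz]]; auto.
by right; apply: ltn_trans lt_yz.
Qed.

Lemma bruhat_lt_coxlen n (u v : 'S_n) : bruhat_lt u v -> coxlen u < coxlen v.
Proof. by case=> /bruhat_le_coxlen[]. Qed.

Lemma bruhat_lt_Mtperm n (u : 'S_n) (x y : 'I_n) :
  x != y -> coxlen u < coxlen (u * tperm x y)%g -> bruhat_lt u (u * tperm x y)%g.
Proof.
move=> ne_xy lt_u; split; first by apply: rt_step; exists x, y.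
by move=> eq_u; rewrite -eq_u ltnn in lt_u.
Qed.

Lemma bruhat_lt_tpermM_descent n (i j : 'I_n) (y : 'S_n) :
  i.+1 = j -> y j < y i -> bruhat_lt (tperm i j * y)%g y.
Proof.
move=> adj_ij y_ji.
have tyJ : (tperm i j * y * tperm (y i) (y j))%g = y.
  by rewrite -tpermJ /conjg !mulgA mulgK tperm2 mul1g.
rewrite -[X in bruhat_lt _ X]tyJ; apply: bruhat_lt_Mtperm.
  by rewrite (inj_eq perm_inj) -val_eqE /= -adj_ij neq_ltn ltnSn.
by rewrite tyJ (coxlen_tpermM_descent adj_ij y_ji) ltnSn.
Qed.

Lemma s_tperm n j (a b : 'I_n) : a = j.-1 :> nat -> b = j :> nat -> s n j = tperm a b.
Proof.
move=> val_a val_b; have lt_a : j.-1 < n by rewrite -val_a.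
have lt_b : j < n by rewrite -val_b.
rewrite /s (insubT (fun k => k < n) lt_a) (insubT (fun k => k < n) lt_b).
by congr tperm; apply: val_inj.
Qed.

Section InvolutionAndAdjacentPair.
Local Open Scope group_scope.

Variables (n : nat) (a b d : 'I_n) (w : 'S_n).
Hypotheses (adj_ab : a.+1 = b) (adj_bd : b.+1 = d) (w_invol : w * w = 1).

Local Notation s1 := (tperm a b).
Local Notation s2 := (tperm b d).

Let wK k : w (w k) = k.
Proof. by rewrite -permM w_invol perm1. Qed.

Let ne_bd : b != d.
Proof. by rewrite -val_eqE /= -adj_bd neq_ltn ltnSn. Qed.

Lemma coxlen_conj_add4_ascent :
  coxlen (s2 * s1 * w * s1 * s2) = coxlen w + 4 -> w a < w b.
Proof.
move=> len_conj; case: (ltngtP (w a) (w b)) => [//|w_ba|/val_inj/perm_inj eq_ab].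
- have le_conj : coxlen (s2 * s1 * w * s1 * s2) <= (coxlen (s1 * w)).+3.
    apply: leq_trans (coxlen_Mtperm_le adj_bd _) _; rewrite ltnS -!mulgA.
    apply: leq_trans (coxlen_tpermM_le adj_bd _) _; rewrite ltnS !mulgA.
    exact: coxlen_Mtperm_le.
  by move: le_conj; rewrite len_conj (coxlen_tpermM_descent adj_ab w_ba); lia.
- by move: adj_ab; rewrite eq_ab; lia.
Qed.

Lemma bruhat_conj_descent :
  w a < w b -> bruhat_lt (s2 * w * s1 * s2) (w * s1 * s2) -> w d < w b.
Proof.
move=> w_ab /bruhat_lt_coxlen; rewrite -!mulgA (coxlen_tpermM_ltE adj_bd) !permM => s2s1_lt.
have w_b_ne_a : w b != a.
  by apply: contraTneq w_ab => w_b; rewrite w_b -{1}w_b wK -leqNgt -adj_ab leqnSn.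
case: (ltngtP (w d) (w b)) => [//|w_bd|/val_inj/perm_inj eq_db]; last first.
  by move: ne_bd; rewrite eq_db eqxx.
have s1_lt : s1 (w b) < s1 (w d) by rewrite (tperm_adj_ltE adj_ab w_bd) xpair_eqE (negbTE w_b_ne_a).
have s2_lt : s2 (s1 (w b)) < s2 (s1 (w d)).
  by rewrite (tperm_adj_ltE adj_bd s1_lt) xpair_eqE (canF_eq (tpermK a b)) tpermR (negbTE w_b_ne_a).
by move: s2s1_lt; rewrite ltnNge (ltnW s2_lt).
Qed.

Lemma commute_or_bruhat_descent :
  w d < w b -> s2 * w = w * s2 \/ bruhat_lt (s2 * w * s2) (s2 * w).
Proof.
move=> w_db; have [/andP[/eqP w_b /eqP w_d]|not_swap] := boolP ((w b == d) && (w d == b)).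
  by left; rewrite conjgC tpermJ w_b w_d tpermC.
right; have s2w_db : s2 (w d) < s2 (w b).
  by rewrite (tperm_adj_ltE adj_bd w_db) xpair_eqE andbC.
have w_inv : w^-1 = w by apply: mulg1_eq.
have len_s2w := coxlen_Mtperm_descent adj_bd (y := s2 * w).
rewrite invMg tpermV w_inv !permM in len_s2w; have {}len_s2w := len_s2w s2w_db.
have s2wK : s2 * w * s2 * s2 = s2 * w by rewrite -mulgA tperm2 mulg1.
rewrite -[X in bruhat_lt _ X]s2wK; apply: bruhat_lt_Mtperm => //.
by rewrite s2wK len_s2w ltnSn.
Qed.

End InvolutionAndAdjacentPair.

Theorem lemma2p17 (n c : nat) (w2 : 'S_n) :
  1 <= c -> c <= n - 2 ->
  (w2 * w2 = 1)%g ->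
  coxlen (s n c.+1 * s n c * w2 * s n c * s n c.+1)%g = coxlen w2 + 4 ->
  (s n c * w2 <> w2 * s n c)%g ->
  (s n c.+1 * s n c * w2 * s n c <> s n c * w2 * s n c * s n c.+1)%g ->
  bruhat_lt (s n c.+1 * w2 * s n c * s n c.+1)%g (w2 * s n c * s n c.+1)%g ->
  bruhat_lt (s n c.+1 * w2)%g w2 /\
  ((s n c.+1 * w2 = w2 * s n c.+1)%g \/
   bruhat_lt (s n c.+1 * w2 * s n c.+1)%g (s n c.+1 * w2)%g).
Proof.
move=> c_ge1 c_le w2_invol len_conj _ _ bruhat_conj.
have lt_a : c.-1 < n by lia.
have lt_b : c < n by lia.
have lt_d : c.+1 < n by lia.
pose a := Ordinal lt_a; pose b := Ordinal lt_b; pose d := Ordinal lt_d.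
have adj_ab : a.+1 = b by rewrite /= prednK.
have adj_bd : b.+1 = d by [].
rewrite (@s_tperm n c a b) // (@s_tperm n c.+1 b d) // in len_conj bruhat_conj *.
have w2_ab := coxlen_conj_add4_ascent adj_ab adj_bd len_conj.
have w2_db := bruhat_conj_descent adj_ab adj_bd w2_invol w2_ab bruhat_conj.
split; first exact: bruhat_lt_tpermM_descent.
exact: commute_or_bruhat_descent.
Qed.
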